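(* Let $S$ be a numerical semigroup with minimal generating set $P$, $D=S^*+S^*$, $X$ its set of nonzero Apéry elements and $G=G(S)=(V,E)$. If $|X\cap D|=|E|$, then every edge $\{u,v\}$ of $G$ with $\{u,v\}\not\subseteq V\cap P$ is of the form $\{x,2x\}$ with $x\in V\cap P$, and $2x$ is a leaf of $G$ whose unique neighbor is $x$ (i.e. $N_G(2x)=\{x\}$).
   Context: A numerical semigroup is a subset $S\subseteq\mathbb N$ containing $0$, closed under addition, with finite complement; $S^*=S\setminus\{0\}$, $m=\min S^*$, $P=S^*\setminus D$. $X=\{s\in S^*: s-m\notin S\}$. The graph $G(S)$ has edge set $E$ consisting of all subsets $\{x,y\}\subseteq X$ ($x=y$ allowed) with $x+y\in X$, and vertex set $V$ the endvertices of these edges. $N_G(x)=\{y\in X: x+y\in X\}$. *)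

From mathcomp Require Import all_boot zify.
Set Implicit Arguments. Unset Strict Implicit. Unset Printing Implicit Defensive.

(* The finite complement is witnessed by an explicit bound
   [ns_bound] beyond which every natural number lies in S; all the notions
   below are independent of the particular witness chosen. *)
Record numsg := NumSg {
  ns_mem : pred nat;
  ns_0 : ns_mem 0;
  ns_add : forall a b, ns_mem a -> ns_mem b -> ns_mem (a + b);
  ns_bound : nat;
  ns_cofinite : forall n, ns_bound <= n -> ns_mem n
}.

Section Defs.
Variable S : numsg.

Definition Sstar (n : nat) : bool := (0 < n) && ns_mem S n.

Lemma Sstar_ex : exists n, Sstar n.
Proof.
exists (ns_bound S).+1; rewrite /Sstar /=; apply: ns_cofinite; exact: leqnSn.
Qed.

Definition mult : nat := ex_minn Sstar_ex.

Definition inX (s : nat) : bool := Sstar s && ~~ ns_mem S (s - mult).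

Definition inD (n : nat) : bool :=
  [exists a : 'I_n.+1, Sstar a && Sstar (n - a)].

(* P = S^* \ D  (the minimal generating set) *)
Definition inP (n : nat) : bool := Sstar n && ~~ inD n.

Definition isEdge (x y : nat) : bool := [&& inX x, inX y & inX (x + y)].

Definition inV (v : nat) : Prop := exists u, isEdge u v.

Definition inN (x y : nat) : bool := inX y && inX (x + y).

Definition Xbound : nat := ns_bound S + mult.

Lemma inX_lt x : inX x -> x < Xbound.
Proof.
rewrite /inX /Xbound => /andP [_ H].
rewrite ltnNge; apply/negP => Hle; move/negP: H; apply.
apply: ns_cofinite; lia.
Qed.

Definition card_XD : nat :=
  count (fun x => inX x && inD x) (iota 0 Xbound).

Definition card_E : nat :=
  count (fun p : nat * nat => (p.1 <= p.2) && isEdge p.1 p.2)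
        [seq (x, y) | x <- iota 0 Xbound, y <- iota 0 Xbound].

End Defs.

(** The sum map {x, y} |-> x + y sends E into X ∩ D, and it is onto: if
    w = a + b ∈ X with a, b ∈ S^*, then a, b ∈ X because X is closed under
    taking summands in S.  So |X ∩ D| = |E| makes every w ∈ X ∩ D the sum of a
    unique edge.  For an edge {u, v} with u = a + b ∈ D, the three edges
    {u, v}, {a, b + v} and {b, a + v} have the same sum, which forces
    a = b = v, i.e. u = 2v; then v ∉ D, and any neighbour y of 2v satisfies
    2v = 2y by the same argument. *)
From mathcomp Require Import all_boot zify.
Set Implicit Arguments. Unset Strict Implicit.

Lemma uniq_map_inj_in (T1 T2 : eqType) (f : T1 -> T2) (s : seq T1) :
  uniq (map f s) -> {in s &, injective f}.
Proof.
elim: s => [|x s IHs] //= /andP [fx_notin /IHs inj_s] y z.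
rewrite !in_cons => /predU1P [-> | ys] /predU1P [-> | zs] // fyz.
- by case/negP: fx_notin; rewrite fyz map_f.
- by case/negP: fx_notin; rewrite -fyz map_f.
- exact: inj_s.
Qed.

Section NumericalSemigroup.
Variable S : numsg.

Lemma mult_minimal n : Sstar S n -> mult S <= n.
Proof. by rewrite /mult; case: ex_minnP => m _; apply. Qed.

Lemma Sstar_gt0 n : Sstar S n -> 0 < n.
Proof. by case/andP. Qed.

Lemma Sstar_addr a b : Sstar S a -> ns_mem S b -> Sstar S (a + b).
Proof. by case/andP=> a_gt0 Sa Sb; rewrite /Sstar ns_add // addn_gt0 a_gt0. Qed.

Lemma inX_Sstar x : inX S x -> Sstar S x.
Proof. by case/andP. Qed.

Lemma inX_summand a b : inX S (a + b) -> Sstar S a -> ns_mem S b -> inX S a.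
Proof.
case/andP=> _ + Sa Sb; rewrite /inX Sa /=; apply: contraNN => amS.
have m_le_a := mult_minimal Sa.
rewrite (_ : a + b - mult S = (a - mult S) + b); last by lia.
exact: ns_add.
Qed.

Lemma inDP w :
  reflect (exists a b, [/\ Sstar S a, Sstar S b & w = a + b]) (inD S w).
Proof.
apply: (iffP existsP).
  move=> [a /andP [Sa Swa]].
  by exists a, (w - a); split => //; have := ltn_ord a; lia.
move=> [a [b [Sa Sb ->]]].
by exists (inord a); rewrite inordK ?addKn ?Sa ?Sb //; lia.
Qed.

Lemma isEdgeC a b : isEdge S a b = isEdge S b a.
Proof. by rewrite /isEdge addnC andbCA. Qed.

Lemma isEdge_summands a b : inX S (a + b) -> Sstar S a -> Sstar S b ->
  isEdge S a b.
Proof.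
move=> Xab Sa Sb; rewrite /isEdge Xab andbT.
rewrite (inX_summand Xab Sa (proj2 (andP Sb))).
by rewrite addnC in Xab; rewrite (inX_summand Xab Sb (proj2 (andP Sa))).
Qed.

Definition edge_list : seq (nat * nat) :=
  [seq p <- [seq (x, y) | x <- iota 0 (Xbound S), y <- iota 0 (Xbound S)]
     | (p.1 <= p.2) && isEdge S p.1 p.2].

Lemma edge_list_mem a b : isEdge S a b -> (minn a b, maxn a b) \in edge_list.
Proof.
move=> ab_edge; have ord_edge : isEdge S (minn a b) (maxn a b).
  by case: (leqP a b) => _ //; rewrite isEdgeC.
rewrite mem_filter ord_edge geq_min leq_maxr orbT /=.
case/and3P: ord_edge => Xmin Xmax _.
by apply: (allpairs_f pair); rewrite mem_iota inX_lt.
Qed.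

Lemma edge_sums_cover w : inX S w -> inD S w ->
  w \in [seq p.1 + p.2 | p <- edge_list].
Proof.
move=> Xw /inDP [a [b [Sa Sb def_w]]]; rewrite def_w in Xw *.
rewrite -addn_min_max.
exact: (map_f (fun p => p.1 + p.2) (edge_list_mem (isEdge_summands Xw Sa Sb))).
Qed.

Hypothesis card_XD_E : card_XD S = card_E S.

Lemma uniq_edge_sums : uniq [seq p.1 + p.2 | p <- edge_list].
Proof.
apply: (@leq_size_uniq _ [seq w <- iota 0 (Xbound S) | inX S w && inD S w]).
- by rewrite filter_uniq ?iota_uniq.
- by move=> w; rewrite mem_filter => /andP [/andP [Xw Dw] _]; apply: edge_sums_cover.
- by rewrite size_map size_filter -/(card_E S) -card_XD_E size_filter.
Qed.

Lemma edge_sum_inj a b c d : isEdge S a b -> isEdge S c d -> a + b = c + d ->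
  (a = c /\ b = d) \/ (a = d /\ b = c).
Proof.
move=> /edge_list_mem ab_in /edge_list_mem cd_in sum_eq.
have := uniq_map_inj_in uniq_edge_sums ab_in cd_in.
by rewrite /= !addn_min_max => /(_ sum_eq) []; lia.
Qed.

Lemma edge_inD_double u v : isEdge S u v -> inD S u -> u = 2 * v.
Proof.
move=> uv_edge /inDP [a [b [Sa Sb def_u]]].
have /and3P [_ Xv Xuv] := uv_edge.
have Sv := proj2 (andP (inX_Sstar Xv)).
rewrite def_u -addnA in Xuv.
have a_bv_edge := isEdge_summands Xuv Sa (Sstar_addr Sb Sv).
rewrite addnCA in Xuv.
have b_av_edge := isEdge_summands Xuv Sb (Sstar_addr Sa Sv).
have := edge_sum_inj uv_edge a_bv_edge; have := edge_sum_inj uv_edge b_av_edge.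
by have := Sstar_gt0 Sa; have := Sstar_gt0 Sb; lia.
Qed.

Lemma edge_inD_inP u v : isEdge S u v -> inD S u -> inP S v.
Proof.
move=> uv_edge Du; have /and3P [Xu Xv _] := uv_edge.
rewrite /inP inX_Sstar //=; apply/negP => Dv.
have := edge_inD_double uv_edge Du; rewrite isEdgeC in uv_edge.
by have := edge_inD_double uv_edge Dv; have := Sstar_gt0 (inX_Sstar Xu); lia.
Qed.

Lemma inN_double x : isEdge S (2 * x) x -> forall y, inN S (2 * x) y <-> y = x.
Proof.
move=> edge2x y; have /and3P [X2x Xx X3x] := edge2x.
split=> [/andP [Xy X2xy] | ->]; last by rewrite /inN Xx X3x.
have D2x : inD S (2 * x).
  by apply/inDP; exists x, x; rewrite inX_Sstar //; split => //; lia.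
have edge2xy : isEdge S (2 * x) y by rewrite /isEdge X2x Xy X2xy.
by have := edge_inD_double edge2xy D2x; lia.
Qed.

Lemma edge_inD_leaf u v : isEdge S u v -> inD S u ->
  [/\ inV S v, inP S v, u = 2 * v & forall y, inN S (2 * v) y <-> y = v].
Proof.
move=> uv_edge Du; have u2v := edge_inD_double uv_edge Du.
split=> //; first by exists u.
  exact: edge_inD_inP uv_edge Du.
by apply: inN_double; rewrite -u2v.
Qed.

End NumericalSemigroup.

Theorem proposition4p17 (S : numsg) :
  card_XD S = card_E S ->
  forall u v : nat, isEdge S u v ->
  ~ (inV S u /\ inP S u /\ inV S v /\ inP S v) ->
  exists x : nat,
    [/\ inV S x, inP S x,
        (u = x /\ v = 2 * x) \/ (u = 2 * x /\ v = x)
      & forall y : nat, inN S (2 * x) y <-> y = x].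
Proof.
move=> card_eq u v uv_edge not_both_P.
have vu_edge : isEdge S v u by rewrite isEdgeC.
have [Du | nDu] := boolP (inD S u).
  have [Vv Pv u2v Nv] := edge_inD_leaf card_eq uv_edge Du.
  by exists v; split=> //; right.
have [Dv | nDv] := boolP (inD S v).
  have [Vu Pu v2u Nu] := edge_inD_leaf card_eq vu_edge Dv.
  by exists u; split=> //; left.
have [Xu Xv _] := and3P uv_edge.
case: not_both_P; rewrite /inP !inX_Sstar ?nDu ?nDv //.
by split; [exists v | do !split=> //; exists u].
Qed.
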